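(* Consider the entry game with $\mathcal{W}=\{1,2\}$, $\mathcal{X}=\{0,1\}$, $\mathcal{C}(w)=\mathcal{X}$ for all $w$, and $F(m,w,x)=-x(-3m^x\{1\}+w)$. For $q\in[0,1]$ let $\lambda_q=q\delta_2+(1-q)\delta_1$. Then for each $q\in[0,1]$, $\mathcal{M}(\lambda_q)=\{m_q\}$, where $m_q\in\mathcal{P}(\mathcal{W}\times\mathcal{X})$ is given by: if $q\le1/3$, $m_q\{(1,0)\}=2/3$, $m_q\{(1,1)\}=1/3-q$, $m_q\{(2,0)\}=0$, $m_q\{(2,1)\}=q$; if $1/3<q<2/3$, $m_q\{(1,0)\}=1-q$, $m_q\{(1,1)\}=0$, $m_q\{(2,0)\}=0$, $m_q\{(2,1)\}=q$; if $q\ge2/3$, $m_q\{(1,0)\}=1-q$, $m_q\{(1,1)\}=0$, $m_q\{(2,0)\}=q-2/3$, $m_q\{(2,1)\}=2/3$.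
   Context: $m^x$ denotes the second marginal of $m\in\mathcal{P}(\mathcal{W}\times\mathcal{X})$. For $\lambda\in\mathcal{P}(\mathcal{W})$, $\mathcal{M}(\lambda)$ (Cournot-Nash equilibria) is the set of $m\in\mathcal{P}(\mathcal{W}\times\mathcal{X})$ with first marginal $\lambda$ such that for $m$-a.e. $(w,x)$, $x\in\mathcal{C}(w)$ and $F(m,w,x)=\min_{y\in\mathcal{C}(w)}F(m,w,y)$. *)

From HB Require Import structures.
From mathcomp Require Import all_boot all_order all_algebra.
Set Implicit Arguments. Unset Strict Implicit. Unset Printing Implicit Defensive.
Import Order.TTheory GRing.Theory Num.Theory.
Local Open Scope ring_scope.

(* Player types W = {1,2}: encoded as 'I_2, index i standing for type i+1. *)
Definition W := 'I_2.
Definition X := 'I_2.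
Definition w1 : W := ord0.
Definition w2 : W := ord_max.
Definition x0 : X := ord0.
Definition x1 : X := ord_max.

Section Game.
Variable R : numFieldType.

Definition wval (w : W) : R := (val w).+1%:R.
Definition xval (x : X) : R := (val x)%:R.

Definition is_prob (T : finType) (m : {ffun T -> R}) : Prop :=
  (forall t, 0 <= m t) /\ \sum_(t : T) m t = 1.

Definition marg_w (m : {ffun W * X -> R}) (w : W) : R := \sum_(x : X) m (w, x).
Definition marg_x (m : {ffun W * X -> R}) (x : X) : R := \sum_(w : W) m (w, x).

Definition C (w : W) : {set X} := [set: X].

Definition F (m : {ffun W * X -> R}) (w : W) (x : X) : R :=
  - xval x * (- 3 * marg_x m x1 + wval w).

(* m is a Cournot-Nash equilibrium with first marginal lambda:
   m in P(W x X), first marginal lambda, and for m-a.e. (w,x)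
   (i.e. every atom of positive mass) x in C(w) and
   F(m,w,x) = min_{y in C(w)} F(m,w,y). *)
Definition CN_eq (lambda : {ffun W -> R}) (m : {ffun W * X -> R}) : Prop :=
  is_prob m /\
  (forall w, marg_w m w = lambda w) /\
  (forall w x, 0 < m (w, x) ->
     x \in C w /\ forall y, y \in C w -> F m w x <= F m w y).

Definition lambda_q (q : R) : {ffun W -> R} :=
  [ffun w => if w == w2 then q else 1 - q].

Definition m_q (q : R) : {ffun W * X -> R} :=
  [ffun p : W * X =>
     let '(w, x) := p in
     if q <= 3^-1 then
       (if w == w1 then (if x == x0 then 2/3 else 3^-1 - q)
        else (if x == x0 then 0 else q))
     else if q < 2/3 then
       (if w == w1 then (if x == x0 then 1 - q else 0)
        else (if x == x0 then 0 else q))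
     else
       (if w == w1 then (if x == x0 then 1 - q else 0)
        else (if x == x0 then q - 2/3 else 2/3))].

End Game.

From HB Require Import structures.
From mathcomp Require Import all_boot all_order all_algebra.
From mathcomp Require Import lra.
Set Implicit Arguments. Unset Strict Implicit. Unset Printing Implicit Defensive.
Import Order.TTheory GRing.Theory Num.Theory.
Local Open Scope ring_scope.

(* Write s = m^x{1} for the mass of entrants.  Staying out costs 0 and entering
   costs 3s - w, so a type-w player enters only if 3s <= w and stays out only if
   3s >= w.  If 3s < 1 everybody enters and if 3s > 2 nobody does, both
   contradicting the value of s; so 1 <= 3s <= 2.  Then type 1 enters only if
   3s = 1 and type 2 stays out only if 3s = 2, which leaves three candidate
   profiles; nonnegativity and 1 <= 3s <= 2 make them valid exactly in the
   three regimes of q defining m_q. *)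

Lemma ord2P (i : 'I_2) : i = ord0 \/ i = ord_max.
Proof. by case: i => -[|[|//]] ?; [left | right]; apply: val_inj. Qed.

Lemma big_ord2 (V : nmodType) (f : 'I_2 -> V) :
  \sum_(i < 2) f i = f ord0 + f ord_max.
Proof. by rewrite big_ord_recl big_ord1; congr (_ + f _); apply: val_inj. Qed.

Lemma sum_W_X (V : nmodType) (f : W * X -> V) :
  \sum_(p : W * X) f p = f (w1, x0) + f (w1, x1) + f (w2, x0) + f (w2, x1).
Proof.
rewrite (eq_bigr (fun p => f (p.1, p.2))); last by case.
rewrite -(pair_bigA _ (fun (w : W) (x : X) => f (w, x))) /=.
by rewrite big_ord2 !big_ord2 addrA.
Qed.

Lemma ge0_eq0_or (R : numDomainType) (a : R) (P : Prop) :
  0 <= a -> (0 < a -> P) -> a = 0 \/ P.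
Proof. by rewrite le0r => /orP[/eqP | a_gt0 /(_ a_gt0)]; [left | right]. Qed.

Lemma W_ind (P : W -> Prop) : P w1 -> P w2 -> forall w, P w.
Proof. by move=> ? ? w; case: (ord2P w) => ->. Qed.

Lemma X_ind (P : X -> Prop) : P x0 -> P x1 -> forall x, P x.
Proof. by move=> ? ? x; case: (ord2P x) => ->. Qed.

Section EntryGame.
Variable R : realFieldType.
Implicit Types (q a b c d : R) (m : {ffun W * X -> R}).

Lemma marg_x1E m : marg_x m x1 = m (w1, x1) + m (w2, x1).
Proof. exact: big_ord2. Qed.

Lemma F_x0 m w : F m w x0 = 0.
Proof. by rewrite /F /xval mulr0n oppr0 mul0r. Qed.

Lemma F_x1 m w : F m w x1 = 3 * marg_x m x1 - wval R w.
Proof. rewrite /F /xval /=; lra. Qed.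

(* [a], [b], [c], [d] are the masses of (1,0), (1,1), (2,0), (2,1), so that
   [b + d] is m^x{1}; the last four clauses are the best-response conditions. *)
Definition entry_equilibrium q a b c d : Prop :=
  [/\ [/\ 0 <= a, 0 <= b, 0 <= c & 0 <= d], a + b = 1 - q, c + d = q &
      [/\ 0 < a -> 1 <= 3 * (b + d), 0 < b -> 3 * (b + d) <= 1,
          0 < c -> 2 <= 3 * (b + d) & 0 < d -> 3 * (b + d) <= 2]].

Lemma CN_eq_lambda_qP q m :
  CN_eq (lambda_q q) m <->
  entry_equilibrium q (m (w1, x0)) (m (w1, x1)) (m (w2, x0)) (m (w2, x1)).
Proof.
have [w1E w2E] : wval R w1 = 1 /\ wval R w2 = 2 by [].
have [lambda1 lambda2] : lambda_q q w1 = 1 - q /\ lambda_q q w2 = q.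
  by rewrite !ffunE.
have margE w : marg_w m w = m (w, x0) + m (w, x1) by exact: big_ord2.
split.
- case=> -[m_ge0 _] [m_marg m_br].
  have br w x y : 0 < m (w, x) -> F m w x <= F m w y.
    by move=> /m_br[_ ->] //; rewrite in_setT.
  split; first by split.
  + by rewrite -margE -lambda1.
  + by rewrite -margE -lambda2.
  + split=> [/(br _ _ x1) | /(br _ _ x0) | /(br _ _ x1) | /(br _ _ x0)];
      rewrite F_x0 F_x1 marg_x1E ?w1E ?w2E; lra.
- case=> -[a_ge0 b_ge0 c_ge0 d_ge0] mass1 mass2 [br_a br_b br_c br_d].
  split; [split | split].
  + by case=> w x; elim/W_ind: w; elim/X_ind: x.
  + by rewrite sum_W_X -addrA mass2 mass1 subrK.
  + by apply: W_ind; rewrite margE ?lambda1 ?lambda2.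
  + move=> w x m_pos; split=> [|y _]; first by rewrite in_setT.
    move: m_pos; elim/W_ind: w; elim/X_ind: x; elim/X_ind: y => // m_pos;
      rewrite F_x0 F_x1 marg_x1E ?w1E ?w2E;
      [ move/br_a: m_pos | move/br_b: m_pos
      | move/br_c: m_pos | move/br_d: m_pos]; lra.
Qed.

Lemma entry_mass_bounds q a b c d :
  entry_equilibrium q a b c d -> 1 <= 3 * (b + d) <= 2.
Proof.
case=> -[a_ge0 b_ge0 c_ge0 d_ge0] mass1 mass2 [br_a br_b br_c br_d].
apply/andP; split.
- have [a0 | //] := ge0_eq0_or a_ge0 br_a.
  have [c0 | ] := ge0_eq0_or c_ge0 br_c; lra.
- have [d0 | //] := ge0_eq0_or d_ge0 br_d.
  have [b0 | ] := ge0_eq0_or b_ge0 br_b; lra.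
Qed.

Lemma entry_equilibrium_cases q a b c d :
  entry_equilibrium q a b c d ->
  [\/ [/\ a = 1 - q, b = 0, c = 0 & d = q],
      [/\ a = 1 - q, b = 0, c = q - 2 / 3 & d = 2 / 3]
    | [/\ a = 2 / 3, b = 3^-1 - q, c = 0 & d = q]].
Proof.
move=> E; have /andP[s_ge s_le] := entry_mass_bounds E.
case: E => -[a_ge0 b_ge0 c_ge0 d_ge0] mass1 mass2 [_ br_b br_c _].
have [b0 | s1] := ge0_eq0_or b_ge0 br_b.
all: have [c0 | s2] := ge0_eq0_or c_ge0 br_c.
- by constructor 1; split; lra.
- by constructor 2; split; lra.
- by constructor 3; split; lra.
- lra.
Qed.

Lemma entry_equilibrium_unique q a b c d : 0 <= q <= 1 ->
  entry_equilibrium q a b c d ->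
  [/\ a = m_q q (w1, x0), b = m_q q (w1, x1),
      c = m_q q (w2, x0) & d = m_q q (w2, x1)].
Proof.
move=> /andP[q_ge0 q_le1] E; have /andP[s_ge s_le] := entry_mass_bounds E.
have [[a_ge0 b_ge0 c_ge0 d_ge0] _ _ _] := E.
case: (entry_equilibrium_cases E) => -[? ? ? ?]; subst a b c d.
all: rewrite !ffunE /=.
all: case: (lerP q 3^-1) => q_small; [|case: (ltrP q (2 / 3)) => q_large].
all: by split; lra.
Qed.

Lemma entry_equilibrium_m_q q : 0 <= q <= 1 ->
  entry_equilibrium q (m_q q (w1, x0)) (m_q q (w1, x1))
                      (m_q q (w2, x0)) (m_q q (w2, x1)).
Proof.
move=> /andP[q_ge0 q_le1]; rewrite !ffunE /=.
case: (lerP q 3^-1) => q_small; [|case: (ltrP q (2 / 3)) => q_large].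
all: by split; [split | | | split] => *; lra.
Qed.

End EntryGame.

Theorem proposition3p13 (R : realFieldType) (q : R) :
  0 <= q <= 1 ->
  forall m : {ffun W * X -> R}, CN_eq (lambda_q q) m <-> m = m_q q.
Proof.
move=> q01 m; rewrite CN_eq_lambda_qP; split=> [|->]; last first.
  exact: entry_equilibrium_m_q.
case/(entry_equilibrium_unique q01) => Ea Eb Ec Ed.
by apply/ffunP => -[w x]; elim/W_ind: w; elim/X_ind: x.
Qed.
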